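(* Let $N\ge1$, $(\Psi_N)_{jk}=\binom{j}{k}$ for $0\le j,k<N$, $\Lambda_N=\mathrm{diag}(1,-1,\dots,(-1)^{N-1})$, and let $J_N$ be the symmetric tridiagonal matrix with $(J_N)_{kk}=k(2k^2+3k+2-N^2)$, $(J_N)_{k,k+1}=(J_N)_{k+1,k}=(k+1)(N^2-(k+1)^2)$. If $\vec v$ is an eigenvector of $J_N$ with eigenvalue $\lambda\neq(N^2-1)/2$, then $\vec v+\Psi_N\Lambda_N\vec v$ and $\vec v-\Psi_N\Lambda_N\vec v$ are nonzero eigenvectors of the binomial transform $\Psi_N\Lambda_N$ with eigenvalues $+1$ and $-1$ respectively. If $N$ is odd and $\vec v$ is an eigenvector of $J_N$ with eigenvalue $(N^2-1)/2$, then $\Psi_N\Lambda_N\vec v=\vec v$.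
   Context: Matrix indices start at $0$. *)

From HB Require Import structures.
From mathcomp Require Import all_boot all_order all_algebra.
Set Implicit Arguments. Unset Strict Implicit. Unset Printing Implicit Defensive.
Import Order.TTheory GRing.Theory Num.Theory.
Local Open Scope ring_scope.

Definition PsiN (R : nzRingType) (N : nat) : 'M[R]_N :=
  \matrix_(j < N, k < N) ('C(j, k))%:R.

Definition LambdaN (R : nzRingType) (N : nat) : 'M[R]_N :=
  \matrix_(j < N, k < N) (if j == k then (-1) ^+ j else 0).

Definition JN (R : nzRingType) (N : nat) : 'M[R]_N :=
  \matrix_(j < N, k < N)
    (if j == k then
       (j%:R) * (2 * (j%:R) ^+ 2 + 3 * j%:R + 2 - (N%:R) ^+ 2)
     else if (k == j.+1 :> nat) then
       (j.+1)%:R * ((N%:R) ^+ 2 - (j.+1)%:R ^+ 2)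
     else if (j == k.+1 :> nat) then
       (k.+1)%:R * ((N%:R) ^+ 2 - (k.+1)%:R ^+ 2)
     else 0).

Definition is_eigenvector (R : nzRingType) (N : nat) (A : 'M[R]_N)
  (v : 'cV[R]_N) (lam : R) : Prop :=
  v != 0 /\ A *m v = lam *: v.

(* Write B = Psi_N Lambda_N. Row j of B lists the coefficients of (1 - X)^j, and
   substituting 1 - X twice is the identity, so B^2 = 1. An entrywise identity between
   binomial coefficients gives J B + B J = (N^2 - 1) B, so B maps the lam-eigenspace of
   J into the (N^2 - 1 - lam)-eigenspace. Hence v + B v and v - B v are eigenvectors of B
   for 1 and -1, and neither vanishes unless lam = N^2 - 1 - lam. In that exceptional
   case B v - v is again a lam-eigenvector of J, with first entry 0 because the first
   row of B is (1, 0, ..., 0); as J is tridiagonal with nonzero off-diagonal entries,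
   its eigenvectors are determined by their first entry, so B v = v. *)

From mathcomp Require Import all_boot all_order all_algebra.
From mathcomp Require Import ring lra zify.
Set Implicit Arguments. Unset Strict Implicit. Unset Printing Implicit Defensive.
Import GRing.Theory Num.Theory.
Local Open Scope ring_scope.

Section AnticommutingInvolution.
Variables (R : fieldType) (n : nat) (A B : 'M[R]_n) (c : R).
Hypothesis AB_anticomm : A *m B + B *m A = c *: B.
Hypothesis B_involutive : B *m B = 1%:M.

Lemma anticomm_eigen p (v : 'M[R]_(n, p)) lam :
  A *m v = lam *: v -> A *m (B *m v) = (c - lam) *: (B *m v).
Proof.
move=> Av; have AB : A *m B = c *: B - B *m A by rewrite -AB_anticomm addrK.
by rewrite mulmxA AB mulmxBl -scalemxAl -mulmxA Av -scalemxAr scalerBl.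
Qed.

Lemma anticomm_eigen_neq_scale (v : 'cV[R]_n) lam s : s != 0 -> lam + lam != c ->
  is_eigenvector A v lam -> B *m v != s *: v.
Proof.
move=> s_neq0 lam2_neq_c [v_neq0 Av]; apply: contra lam2_neq_c => /eqP Bv.
have := anticomm_eigen Av; rewrite Bv -scalemxAr Av !scalerA mulrC => /eqP.
rewrite -subr_eq0 -scalerBl scaler_eq0 (negbTE v_neq0) orbF -mulrBl mulf_eq0.
by rewrite (negbTE s_neq0) orbF subr_eq0 eq_sym subr_eq eq_sym.
Qed.

Lemma anticomm_eigen_addr (v : 'cV[R]_n) lam : lam + lam != c ->
  is_eigenvector A v lam -> is_eigenvector B (v + B *m v) 1.
Proof.
move=> lam2_neq_c v_eigen; split.
  rewrite addrC addr_eq0 -scaleN1r.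
  by apply: anticomm_eigen_neq_scale lam2_neq_c v_eigen; rewrite oppr_eq0 oner_eq0.
by rewrite mulmxDr mulmxA B_involutive mul1mx scale1r addrC.
Qed.

Lemma anticomm_eigen_subr (v : 'cV[R]_n) lam : lam + lam != c ->
  is_eigenvector A v lam -> is_eigenvector B (v - B *m v) (-1).
Proof.
move=> lam2_neq_c v_eigen; split.
  rewrite subr_eq0 eq_sym -[v in _ == v]scale1r.
  by apply: anticomm_eigen_neq_scale lam2_neq_c v_eigen; rewrite oner_eq0.
by rewrite mulmxBr mulmxA B_involutive mul1mx scaleN1r opprB.
Qed.

End AnticommutingInvolution.

Lemma sum_ord_delta (R : nzSemiRingType) n m (F : nat -> R) :
  \sum_(k < n) (k == m :> nat)%:R * F k = if (m < n)%N then F m else 0.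
Proof.
have delta0 (k : 'I_n) : k != m :> nat -> (k == m :> nat)%:R * F k = 0.
  by move/negbTE->; rewrite mul0r.
case: (ltnP m n) => [lt_mn | le_nm].
  rewrite (bigD1 (Ordinal lt_mn)) // eqxx mul1r big1 => [|k ne_k]; first exact: addr0.
  by apply: delta0; apply: contraNneq ne_k => eq_k; apply/eqP/val_inj.
rewrite big1 // => k _; apply: delta0.
by rewrite neq_ltn (leq_trans (ltn_ord k)).
Qed.

(* [b k] is the entry at positions (k-1, k) and (k, k-1). *)
Definition tridiag (R : nzRingType) n (a b : nat -> R) : 'M[R]_n :=
  \matrix_(j, k) (if j == k then a j else if k == j.+1 :> nat then b j.+1
                  else if j == k.+1 :> nat then b k.+1 else 0).

Section Tridiagonal.
Variables (R : nzRingType) (n : nat) (a b : nat -> R).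

Lemma tridiagE (j k : 'I_n) : tridiag n a b j k =
  (j == k :> nat)%:R * a j + (k == j.+1 :> nat)%:R * b j.+1
  + (j == k.+1 :> nat)%:R * b k.+1.
Proof.
rewrite mxE -val_eqE /=.
case: (eqVneq (j : nat) k) => [<- | _].
  by rewrite ltn_eqF // mul0r !addr0 mul1r.
case: (eqVneq (k : nat) j.+1) => [-> | _].
  by rewrite (@ltn_eqF j j.+2) // !mul0r mul1r add0r addr0.
by case: (j == k.+1 :> nat); rewrite ?mul0r ?mul1r ?add0r.
Qed.

Lemma tr_tridiag : (tridiag n a b)^T = tridiag n a b.
Proof.
apply/matrixP => j k; rewrite mxE !tridiagE [k == j :> nat]eq_sym.
case: (eqVneq (j : nat) k) => [-> | _]; first by [].
by rewrite !mul0r !add0r addrC.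
Qed.

End Tridiagonal.

Section TridiagonalProducts.
Variables (R : comNzRingType) (n : nat) (a b : nat -> R).
Hypotheses (b0 : b 0%N = 0) (b_top : b n.+1 = 0).

Lemma tridiag_mulmx p (F : nat -> nat -> R) (j : 'I_n.+1) (q : 'I_p) :
  (tridiag n.+1 a b *m \matrix_(i, k) F i k) j q
  = a j * F j q + b j.+1 * F j.+1 q + b j * F j.-1 q.
Proof.
rewrite mxE; under eq_bigr => k _ do rewrite tridiagE mxE !mulrDl -!mulrA.
rewrite !big_split /=; congr (_ + _ + _).
- under eq_bigr => k _ do rewrite eq_sym.
  by rewrite (sum_ord_delta _ _ (fun k => a j * F k q)) ltn_ord.
- rewrite (sum_ord_delta _ _ (fun k => b j.+1 * F k q)); case: ltnP => // le_nj.
  have -> : j.+1 = n.+1 by have := ltn_ord j; lia.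
  by rewrite b_top mul0r.
- case: j => [[|j] lt_jn] /=; last first.
    under eq_bigr => k _ do rewrite eqSS eq_sym.
    by rewrite (sum_ord_delta _ _ (fun k => b k.+1 * F k q)) ltnW.
  by rewrite b0 mul0r big1 // => k _; rewrite mul0r.
Qed.

Lemma mulmx_tridiag p (F : nat -> nat -> R) (q : 'I_p) (l : 'I_n.+1) :
  (\matrix_(i, k) F i k *m tridiag n.+1 a b) q l
  = a l * F q l + b l * F q l.-1 + b l.+1 * F q l.+1.
Proof.
transitivity ((\matrix_(i, k) F i k *m tridiag n.+1 a b)^T l q); first by rewrite [RHS]mxE.
rewrite trmx_mul tr_tridiag.
have -> : (\matrix_(i < p, k < n.+1) F i k)^T = \matrix_(i, k) F k i.
  by apply/matrixP => i k; rewrite !mxE.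
by rewrite (tridiag_mulmx (fun i k => F k i)) addrAC.
Qed.

End TridiagonalProducts.

Lemma tridiag_eigen_eq0 (R : idomainType) n (a b : nat -> R) (w : 'cV[R]_n.+1) lam :
  b 0%N = 0 -> b n.+1 = 0 -> (forall k, (0 < k <= n)%N -> b k != 0) ->
  tridiag n.+1 a b *m w = lam *: w -> w ord0 0 = 0 -> w = 0.
Proof.
move=> b0 b_top b_neq0 w_eigen w0.
pose F i : R := w (inord i) 0.
have w_F : w = \matrix_(i, k) F i.
  by apply/matrixP => i k; rewrite mxE /F (ord1 k) inord_val.
have F_step i : (i < n)%N -> F i = 0 -> F i.-1 = 0 -> F i.+1 = 0.
  move=> lt_in Fi Fi1; have := congr1 (fun M : 'cV[R]_n.+1 => M (inord i) 0) w_eigen.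
  rewrite {1}w_F (tridiag_mulmx a b0 b_top (fun i _ => F i)) mxE !inordK; last exact: ltnW.
  rewrite -/(F i) Fi Fi1 !mulr0 add0r addr0 => /eqP.
  by rewrite mulf_eq0 (negbTE (b_neq0 i.+1 lt_in)) => /eqP.
have F_eq0 m : (m <= n)%N -> F m = 0 /\ F m.-1 = 0.
  elim: m => [|i IH] le_in.
    suff -> : F 0%N = 0 by [].
    by rewrite /F (_ : inord 0 = ord0) //; apply: val_inj => /=; rewrite inordK.
  have [Fi Fi1] := IH (ltnW le_in).
  by split; [apply: F_step|].
apply/matrixP => k c; rewrite (ord1 c) [RHS]mxE.
by have [] := F_eq0 k (ltn_ord k); rewrite /F inord_val.
Qed.

Definition signed_binom {R : nzRingType} (j l : nat) : R := 'C(j, l)%:R * (-1) ^+ l.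

Lemma PsiLambdaE (R : nzRingType) n :
  PsiN R n *m LambdaN R n = \matrix_(j, k) signed_binom j k.
Proof.
apply/matrixP => j k; rewrite !mxE (bigD1 k) //= !mxE eqxx big1 ?addr0 // => i ne_ik.
by rewrite !mxE (negbTE ne_ik) mulr0.
Qed.

Lemma PsiLambda_mulmx_row0 (R : nzRingType) n p (M : 'M[R]_(n.+1, p)) q :
  (PsiN R n.+1 *m LambdaN R n.+1 *m M) ord0 q = M ord0 q.
Proof.
rewrite PsiLambdaE mxE big_ord_recl !mxE /signed_binom bin0 mul1r expr0 mul1r.
by rewrite big1 ?addr0 // => k _; rewrite !mxE bin0n mul0r mul0r.
Qed.

Lemma coef_1subX_exp (R : comNzRingType) j l : ((1 - 'X) ^+ j : {poly R})`_l = signed_binom j l.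
Proof.
elim: j l => [|j IH] [|l]; rewrite /signed_binom.
- by rewrite expr0 coef1 mulr1.
- by rewrite expr0 coef1 mul0r.
- by rewrite exprSr mulrBr mulr1 coefB coefMX !IH /signed_binom subr0 !bin0.
rewrite exprSr mulrBr mulr1 coefB coefMX !IH /signed_binom binS natrD !exprS /=; ring.
Qed.

Lemma PsiLambda_involutive (R : comNzRingType) n :
  (PsiN R n *m LambdaN R n) *m (PsiN R n *m LambdaN R n) = 1%:M.
Proof.
rewrite PsiLambdaE; apply/matrixP => j l; rewrite mxE.
under eq_bigr => k _ do rewrite !mxE -!coef_1subX_exp -coefZ.
rewrite -coef_sum.
set p : {poly R} := (1 - 'X) ^+ j.
have size_p : (size p <= n)%N.
  apply/leq_sizeP => i le_ni; rewrite coef_1subX_exp /signed_binom bin_small ?mul0r //.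
  exact: leq_trans (ltn_ord j) le_ni.
have -> : \sum_(k < n) p`_k *: (1 - 'X) ^+ k = p \Po (1 - 'X).
  rewrite comp_polyE (big_ord_widen n (fun i => p`_i *: (1 - 'X) ^+ i) size_p).
  rewrite [RHS]big_mkcond; apply: eq_bigr => i _.
  by case: ifP => // /negbT; rewrite -leqNgt => le_pi; rewrite nth_default ?scale0r.
rewrite /p rmorphXn rmorphB /= comp_polyX rmorph1 opprB addrC subrK coefXn.
by rewrite mxE eq_sym.
Qed.

Definition Jdiag {R : nzRingType} (N k : nat) : R :=
  k%:R * (2 * k%:R ^+ 2 + 3 * k%:R + 2 - N%:R ^+ 2).

Definition Joff {R : nzRingType} (N k : nat) : R := k%:R * (N%:R ^+ 2 - k%:R ^+ 2).

Lemma Joff0 (R : nzRingType) N : Joff N 0 = 0 :> R.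
Proof. by rewrite /Joff mul0r. Qed.

Lemma JoffNN (R : nzRingType) N : Joff N N = 0 :> R.
Proof. by rewrite /Joff subrr mulr0. Qed.

Lemma Joff_neq0 (R : numDomainType) N k : (0 < k < N)%N -> Joff N k != 0 :> R.
Proof.
case/andP => k_gt0 lt_kN; rewrite /Joff mulf_eq0 pnatr_eq0 negb_or -lt0n k_gt0 /=.
by rewrite subr_eq0 -!natrX eqr_nat eqn_exp2r // gtn_eqF.
Qed.

Lemma JN_tridiag (R : nzRingType) N : JN R N = tridiag N (Jdiag N) (Joff N).
Proof. by []. Qed.

Lemma JN_PsiLambda_anticomm_interior (R : realFieldType) N j l : (l < j)%N ->
  Jdiag N j * signed_binom j l.+1 + Joff N j.+1 * signed_binom j.+1 l.+1
  + Joff N j * signed_binom j.-1 l.+1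
  + (Jdiag N l.+1 * signed_binom j l.+1 + Joff N l.+1 * signed_binom j l
     + Joff N l.+2 * signed_binom j l.+2)
  = (N%:R ^+ 2 - 1 : R) * signed_binom j l.+1.
Proof.
move=> lt_lj; have le_lj := ltnW lt_lj; rewrite /signed_binom.
have ltR_lj : l%:R < j%:R :> R by rewrite ltr_nat.
have l_ge0 : 0 <= l%:R :> R by rewrite ler0n.
set c : R := 'C(j, l.+1)%:R.
(* Every binomial coefficient involved is a rational multiple of c = C(j, l+1). *)
have binS_c : 'C(j.+1, l.+1)%:R = j.+1%:R * c / (j.+1%:R - l.+1%:R) :> R.
  have : (j.+1%:R - l.+1%:R) * 'C(j.+1, l.+1)%:R = j.+1%:R * c :> R.
    by rewrite /c -natrB // -!natrM mul_bin_down.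
  move <-; field; apply: lt0r_neq0; lra.
have binP_c : j%:R * 'C(j.-1, l.+1)%:R = (j%:R - l.+1%:R) * c :> R.
  by rewrite -natrB // -!natrM mul_bin_down.
have binS2_c : 'C(j, l.+2)%:R = (j%:R - l.+1%:R) * c / l.+2%:R :> R.
  have : l.+2%:R * 'C(j, l.+2)%:R = (j%:R - l.+1%:R) * c :> R.
    by rewrite /c -natrB // -!natrM mul_bin_left.
  move <-; field; apply: lt0r_neq0; lra.
have bin_c : 'C(j, l)%:R = l.+1%:R * c / (j%:R - l%:R) :> R.
  have : l.+1%:R * c = (j%:R - l%:R) * 'C(j, l)%:R :> R.
    by rewrite /c -natrB // -!natrM mul_bin_left.
  move ->; field; apply: lt0r_neq0; lra.
have Joff_binP : Joff N j * ('C(j.-1, l.+1)%:R * (-1) ^+ l.+1)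
    = (N%:R ^+ 2 - j%:R ^+ 2) * ((j%:R - l.+1%:R) * c) * (-1) ^+ l.+1 :> R.
  by rewrite -binP_c /Joff; ring.
rewrite Joff_binP /= binS_c binS2_c bin_c !exprS /Jdiag /Joff.
by field; apply/andP; split; apply: lt0r_neq0; lra.
Qed.

Lemma JN_PsiLambda_anticomm_entry (R : realFieldType) N j l :
  Jdiag N j * signed_binom j l + Joff N j.+1 * signed_binom j.+1 l
  + Joff N j * signed_binom j.-1 l
  + (Jdiag N l * signed_binom j l + Joff N l * signed_binom j l.-1
     + Joff N l.+1 * signed_binom j l.+1)
  = (N%:R ^+ 2 - 1 : R) * signed_binom j l.
Proof.
case: (ltnP j.+1 l) => [lt_jl | le_lj].
  by rewrite /signed_binom !bin_small; try lia; rewrite !mul0r !mulr0 !addr0.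
case: (eqVneq l j.+1) => [-> | ne_lj].
  rewrite /signed_binom /= !binn !bin_small; try lia.
  by rewrite exprS; ring.
case: l => [|l] in le_lj ne_lj *.
  by rewrite /signed_binom /= !bin0 bin1 expr0 expr1 /Jdiag /Joff; ring.
by apply: JN_PsiLambda_anticomm_interior; move/eqP: ne_lj; lia.
Qed.

Lemma JN_PsiLambda_anticomm (R : realFieldType) n :
  JN R n.+1 *m (PsiN R n.+1 *m LambdaN R n.+1) + PsiN R n.+1 *m LambdaN R n.+1 *m JN R n.+1
  = (n.+1%:R ^+ 2 - 1) *: (PsiN R n.+1 *m LambdaN R n.+1).
Proof.
rewrite JN_tridiag PsiLambdaE; apply/matrixP => i l.
rewrite [LHS]mxE tridiag_mulmx ?Joff0 ?JoffNN // mulmx_tridiag ?Joff0 ?JoffNN // !mxE.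
exact: JN_PsiLambda_anticomm_entry.
Qed.

Theorem mainTheorem12 (R : realFieldType) (N : nat) (hN : (1 <= N)%N) :
  (forall (v : 'cV[R]_N) (lam : R),
     is_eigenvector (JN R N) v lam ->
     lam != ((N%:R) ^+ 2 - 1) / 2 ->
     is_eigenvector (PsiN R N *m LambdaN R N)
       (v + (PsiN R N *m LambdaN R N) *m v) 1 /\
     is_eigenvector (PsiN R N *m LambdaN R N)
       (v - (PsiN R N *m LambdaN R N) *m v) (-1)) /\
  (odd N ->
   forall v : 'cV[R]_N,
     is_eigenvector (JN R N) v (((N%:R) ^+ 2 - 1) / 2) ->
     (PsiN R N *m LambdaN R N) *m v = v).
Proof.
case: N hN => [//|n] _.
have anticomm := JN_PsiLambda_anticomm R n.
have involutive := PsiLambda_involutive R n.+1.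
split=> [v lam v_eigen lam_neq | _ v [_ Jv]].
  have lam2_neq : lam + lam != n.+1%:R ^+ 2 - 1.
    by apply: contra lam_neq => /eqP <-; apply/eqP; field.
  by split; [apply: (anticomm_eigen_addr anticomm involutive _ v_eigen) |
            apply: (anticomm_eigen_subr anticomm involutive _ v_eigen)].
apply/eqP; rewrite -subr_eq0; apply/eqP.
apply: (tridiag_eigen_eq0 (a := Jdiag n.+1) (lam := (n.+1%:R ^+ 2 - 1) / 2)
         (Joff0 R n.+1) (JoffNN R n.+1)).
- by move=> k k_range; apply: Joff_neq0.
- rewrite -JN_tridiag mulmxBr (anticomm_eigen anticomm Jv) Jv.
  by rewrite scalerBr; congr (_ *: _ - _); field.
- by rewrite mxE PsiLambda_mulmx_row0 mxE subrr.
Qed.
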